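(* Let $\Lambda$ be a Legendrian knot in $(\mathbb{R}^3,dz-y\,dx)$ with generic Lagrangian projection, and let $\epsilon:(\mathcal{A}_\Lambda,\partial_\Lambda)\to(\mathbb{Z}_2,0)$ be an augmentation. Then \[ MC(z)-PC^\epsilon(z)=(z+1)R(z), \] where $R(z)=\sum_k\#\{\text{finite bars in }F^\bullet\mathrm{LCH}^\epsilon_k(\Lambda)\}\,z^k$.
   Context: $(\mathcal{A}_\Lambda,\partial_\Lambda)$ is the Chekanov–Eliashberg DGA over $\mathbb{Z}_2$ of $\Lambda$, generated by the Reeb chords (double points of the Lagrangian projection) $q_1,\dots,q_n$, with $\mathbb{Z}$-grading $|q_i|$. An augmentation is an algebra map $\epsilon:\mathcal{A}_\Lambda\to\mathbb{Z}_2$ vanishing on nonzero degrees with $\epsilon\circ\partial_\Lambda=0$; $\partial_1^\epsilon$ is the linearized differential (length-one part of $\phi^\epsilon\partial_\Lambda(\phi^\epsilon)^{-1}$, $\phi^\epsilon(q_i)=q_i+\epsilon(q_i)$) on the vector space $A_\Lambda$ with basis $q_1,\dots,q_n$, and $\mathrm{LCH}^\epsilon_k(\Lambda)=H_k(A_\Lambda,\partial^\epsilon_1)$. Morse–Chekanov polynomial: $MC(z)=\sum_k\#\{\text{Reeb chords of grading }k\}z^k$. Poincaré–Chekanov polynomial: $PC^\epsilon(z)=\sum_k\dim_{\mathbb{Z}_2}\mathrm{LCH}^\epsilon_k(\Lambda)z^k$. Each $q_i$ has height $h(q_i)=\int_{\gamma_i}(dz-y\,dx)>0$ over its Reeb chord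 $\gamma_i$; $\partial_1^\epsilon$ strictly decreases height. $F^\bullet\mathrm{LCH}^\epsilon_k(\Lambda)$ is the persistence module $t\mapsto H_k(A^t,\partial_1^\epsilon)$ with $A^t$ spanned by the $q_i$ with $h(q_i)\le t$ and transfer maps induced by inclusion; it decomposes uniquely as a direct sum of interval modules (its barcode), and a finite bar is a summand supported on a bounded interval. *)

From HB Require Import structures.
From mathcomp Require Import all_boot all_order all_algebra.
From mathcomp Require Import reals.
Set Implicit Arguments. Unset Strict Implicit. Unset Printing Implicit Defensive.
Import Order.TTheory GRing.Theory Num.Theory.
Local Open Scope ring_scope.

Section CE.
Variable n : nat.

(* A word in the generators q_0..q_{n-1}, i.e. a monomial of A_Lambda. *)
Definition word := seq 'I_n.

(* The differential on generators: dq i is the list of words of d(q_i),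
   counted with multiplicity modulo 2 (coefficients in Z_2). *)
Variable dq : 'I_n -> seq word.

(* Extension of the differential to words by the (sign-free, Z_2) Leibniz
   rule; a sum of words is again represented by a list (mod 2). *)
Fixpoint dword (w : word) : seq word :=
  match w with
  | [::] => [::]
  | a :: w' => [seq v ++ w' | v <- dq a] ++ [seq a :: u | u <- dword w']
  end.

Definition dsum (s : seq word) : seq word := flatten (map dword s).

(* d o d = 0 on generators (hence on A_Lambda): every word occurs an even
   number of times in d(d q_i). *)
Definition dd_zero : Prop :=
  forall (i : 'I_n) (u : word), ~~ odd (count_mem u (dsum (dq i))).

Variable eps : 'I_n -> 'F_2.

Definition delta_row (a : 'I_n) : 'rV['F_2]_n := \row_j (j == a)%:R.

(* Length-one part of phi^eps(w) = prod_j (q_{w_j} + eps(q_{w_j})). *)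
Fixpoint lin (w : word) : 'rV['F_2]_n :=
  match w with
  | [::] => 0
  | a :: w' => (\prod_(b <- w') eps b) *: delta_row a + eps a *: lin w'
  end.

(* Matrix of the linearized differential acting on row vectors:
   d_1^eps (sum_i u_i q_i) = u *m linD. Row i = d_1^eps(q_i). *)
Definition linD : 'M['F_2]_n := \matrix_(i, j) (\sum_(w <- dq i) lin w) 0 j.

Definition is_augmentation (deg : 'I_n -> int) : Prop :=
  (forall i, deg i != 0 -> eps i = 0) /\
  (forall i, \sum_(w <- dq i) \prod_(b <- w) eps b = 0).

Variable deg : 'I_n -> int.

Definition mc_coef (k : int) : nat := #|[set i : 'I_n | deg i == k]|.

Definition Sdeg (k : int) : 'M['F_2]_n := diag_mx (\row_i (deg i == k)%:R).

Definition cycles (k : int) := (Sdeg k :&: kermx linD)%MS.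
Definition boundaries (k : int) := (Sdeg (k + 1) *m linD)%MS.

(* dim LCH^eps_k = dim (cycles / boundaries). *)
Definition pc_coef (k : int) : nat := (\rank (cycles k) - \rank (boundaries k))%N.

Variable R : realType.
Variable h : 'I_n -> R.

Definition Sfilt (k : int) (t : R) : 'M['F_2]_n :=
  diag_mx (\row_i ((deg i == k) && (h i <= t))%:R).

Definition fcycles (k : int) (t : R) := (Sfilt k t :&: kermx linD)%MS.
Definition fboundaries (k : int) (t : R) := (Sfilt (k + 1) t *m linD)%MS.

(* An interval-module decomposition (barcode) of the persistence module
   t |-> H_k(A^t, d_1^eps), given as an internal direct sum of interval
   submodules: bar j has (nonempty) support I j and is generated by the
   classes of the cycles row j (x t), t \in I j. *)
Definition is_barcode (k : int) (m : nat) (I : 'I_m -> interval R)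
    (x : R -> 'M['F_2]_(m, n)) : Prop :=
  (forall j, exists t, t \in I j) /\
  (forall t : R,
     let P : 'M['F_2]_m := diag_mx (\row_j (t \in I j)%:R) in
     (P *m x t <= fcycles k t)%MS /\
     (fcycles k t <= P *m x t + fboundaries k t)%MS /\
     (forall a : 'rV['F_2]_m,
        (a *m (P *m x t) <= fboundaries k t)%MS -> a *m P = 0)) /\
  (forall (j : 'I_m) (s t : R), s <= t -> s \in I j ->
     if t \in I j then (row j (x s) - row j (x t) <= fboundaries k t)%MS
     else (row j (x s) <= fboundaries k t)%MS).

End CE.

(* A bar is finite iff it is supported on a bounded interval. *)
Definition bounded_itv (R : numDomainType) (I : interval R) : bool :=
  match I with
  | Interval (BSide _ _) (BSide _ _) => true
  | _ => false
  end.

Definition nfinite (R : numDomainType) (m : nat) (I : 'I_m -> interval R) : nat :=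
  #|[set j : 'I_m | bounded_itv (I j)]|.

From HB Require Import structures.
From mathcomp Require Import all_boot all_order all_algebra.
From mathcomp Require Import reals.
From mathcomp Require Import zify.
Set Implicit Arguments. Unset Strict Implicit. Unset Printing Implicit Defensive.
Import Order.TTheory GRing.Theory Num.Theory.
Local Open Scope ring_scope.

(* Rank-nullity for d_1 restricted to degree k gives mc_k = dim Z_k + rk B_(k-1),
   where Z_j and B_j are the degree-j cycles and boundaries, hence
   mc_k - pc_k = rk B_(k-1) + rk B_k.  It remains to see that rk B_k is the
   number of finite bars in degree k.  Since d_1 strictly lowers the height,
   for consecutive critical heights s < t every boundary at t is already a cycle
   at s; so B_t is spanned by B_s together with the generators of the bars dying
   in (s, t], and these are independent modulo B_s.  Telescoping over the
   critical heights, rk B_T (T above all heights) is the number of bars dead by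
   T.  No bar lives at a height <= 0 and none dies after T, so these are exactly
   the bounded bars. *)

Section SelectionMatrices.
Context {F : fieldType}.

Definition sel_mx m (f : pred 'I_m) : 'M[F]_m := diag_mx (\row_i (f i)%:R).

Lemma mul_sel_mx m (f g : pred 'I_m) :
  sel_mx f *m sel_mx g = sel_mx (fun i => f i && g i).
Proof.
rewrite /sel_mx mulmx_diag; congr diag_mx; apply/rowP => i; rewrite !mxE.
by case: (f i); rewrite ?mul1r ?mul0r.
Qed.

Lemma eq_sel_mx m (f g : pred 'I_m) : f =1 g -> sel_mx f = sel_mx g.
Proof. by move=> fg; congr diag_mx; apply/rowP => i; rewrite !mxE fg. Qed.

Lemma sel_mx_pred0 m (f : pred 'I_m) : f =1 xpred0 -> sel_mx f = 0.
Proof. by move=> f0; apply/matrixP => i j; rewrite !mxE f0 mul0rn. Qed.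

Lemma sel_mx_subset m (f g : pred 'I_m) :
  (forall i, f i -> g i) -> sel_mx f *m sel_mx g = sel_mx f.
Proof.
move=> fg; rewrite mul_sel_mx; apply: eq_sel_mx => i.
by case fi: (f i); rewrite ?(fg i fi).
Qed.

Lemma sel_mxS m (f g : pred 'I_m) : (forall i, f i -> g i) -> (sel_mx f <= sel_mx g)%MS.
Proof. by move=> fg; rewrite -(sel_mx_subset fg) submxMl. Qed.

Lemma sel_mx_split m (f g : pred 'I_m) :
  sel_mx f = sel_mx (fun i => f i && g i) + sel_mx (fun i => f i && ~~ g i).
Proof.
apply/matrixP => i j; rewrite !mxE -mulrnDl -natrD.
by case: (f i); case: (g i).
Qed.

Lemma row_sel_mxM m n (f : pred 'I_m) (Y : 'M[F]_(m, n)) j :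
  row j (sel_mx f *m Y) = (f j)%:R *: row j Y.
Proof. by rewrite mul_diag_mx; apply/rowP => k; rewrite !mxE. Qed.

Lemma rank_sel_mx m (f : pred 'I_m) : \rank (sel_mx f) = #|[set i | f i]|.
Proof.
have /eqmx_rank -> : (sel_mx f == \sum_(i | f i) <<delta_mx 0 i : 'rV[F]_m>>)%MS.
  apply/andP; split.
    apply/row_subP => i; rewrite row_diag_mx mxE.
    case fi: (f i); last by rewrite scale0r sub0mx.
    by rewrite scale1r (sumsmx_sup i) ?genmxE.
  apply/sumsmx_subP => i fi; rewrite genmxE.
  by have := row_sub i (sel_mx f); rewrite row_diag_mx mxE fi scale1r.
rewrite (mxdirectP (mxdirect_delta _ (in2W (@inj_id _)))) /=.
rewrite -sum1dep_card; apply: eq_bigr => i _.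
by rewrite mxrank_gen mxrank_delta.
Qed.

Lemma mxrank_adds_sel n r m (W : 'M[F]_(r, n)) (f : pred 'I_m) (Y : 'M_(m, n)) :
  (forall a : 'rV_m, (a *m (sel_mx f *m Y) <= W)%MS -> a *m sel_mx f = 0) ->
  \rank (W + sel_mx f *m Y)%MS = (\rank W + #|[set j | f j]|)%N.
Proof.
move=> indep.
have rankS : \rank (sel_mx f *m Y) = #|[set j | f j]|.
  rewrite -rank_sel_mx -(mxrank_mul_ker (sel_mx f) Y).
  suff -> : (sel_mx f :&: kermx Y)%MS = 0 by rewrite mxrank0 addn0.
  apply/eqP; rewrite -submx0; apply/rV_subP => v.
  rewrite sub_capmx => /andP[/submxP[c ->]].
  by rewrite sub_kermx -mulmxA => /eqP cY0; rewrite indep ?cY0 ?sub0mx.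
have capW0 : (W :&: sel_mx f *m Y)%MS = 0.
  apply/eqP; rewrite -submx0; apply/rV_subP => v.
  rewrite sub_capmx => /andP[vW /submxP[c ci]].
  by rewrite ci mulmxA indep -?ci ?mul0mx ?sub0mx.
by rewrite -rankS -(mxrank_sum_cap W) capW0 mxrank0 addn0.
Qed.
End SelectionMatrices.

Section Intervals.
Variable R : realDomainType.
Implicit Types (i : interval R) (a b c : R).

Lemma mem_itv_between i a b c : a <= b -> b <= c -> a \in i -> c \in i -> b \in i.
Proof.
move=> ab bc; case: i => l r; rewrite !itv_boundlr => /andP[la _] /andP[_ cr].
by rewrite (le_trans la) ?(le_trans _ cr) // leBSide /= ?ab ?bc.
Qed.

Lemma bounded_itv_gap i a b c :
  a <= b -> b <= c -> a \notin i -> b \in i -> c \notin i -> bounded_itv i.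
Proof.
move=> ab bc; case: i => l r; rewrite !itv_boundlr.
move=> /nandP aout /andP[lb br] /nandP cout.
have la : ~~ (l <= BLeft a)%O.
  by case: aout => // /negP[]; rewrite (le_trans _ br) // leBSide /= ab.
have rc : ~~ (BRight c <= r)%O.
  by case: cout => // /negP[]; rewrite (le_trans lb) // leBSide /= bc.
by clear aout cout; case: l lb la => [? ?|[]] //; case: r br rc => [? ?|[]].
Qed.

Lemma bounded_itv_notin_ge i a : bounded_itv i -> exists2 c, a <= c & c \notin i.
Proof.
case: i => [[cl l|//] [cr r|//]] _.
have lt_c x : x <= Num.max a r -> x < Num.max a r + 1.
  by move=> xm; rewrite (le_lt_trans xm) // ltrDl ltr01.
exists (Num.max a r + 1); first by rewrite ltW ?lt_c // le_max lexx.
have rc : r < Num.max a r + 1 by rewrite lt_c // le_max lexx orbT.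
rewrite itv_boundlr negb_and.
by case: cr; rewrite bnd_simp -?leNgt -?ltNge ?rc ?(ltW rc) orbT.
Qed.

End Intervals.

Section CriticalValues.
Variable R : realDomainType.
Implicit Types (hs L : seq R) (s t : R).

Lemma exists_last_critical hs (x0 s : R) : x0 <= s ->
  exists2 g, g \in x0 :: hs & (g <= s) /\ {in hs, forall c, c <= s -> c <= g}.
Proof.
move=> x0s; elim: hs => [|c hs [g gin [gs gmax]]]; first by exists x0; rewrite ?inE.
have {}gin : g \in x0 :: c :: hs.
  by move: gin; rewrite !inE => /orP[]->; rewrite ?orbT.
have [cs|sc] := leP c s; last first.
  exists g => //.
  split=> // d; rewrite inE => /orP[/eqP-> cs|/gmax//].
  by have := lt_le_trans sc cs; rewrite ltxx.
have [gc|cg] := leP g c.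
  exists c; first by rewrite !inE eqxx orbT.
  split=> // d; rewrite inE => /orP[/eqP-> _|/gmax dg ds]; first exact: lexx.
  exact: le_trans (dg ds) gc.
exists g => //.
by split=> // d; rewrite inE => /orP[/eqP-> _|/gmax//]; apply: ltW.
Qed.

Lemma path_no_critical_between hs (x0 : R) L :
  path <=%R x0 L -> {in hs, forall c, (c \in L) || (c <= x0)} ->
  path (fun s t => (s <= t) && all (fun c => (c < t) ==> (c <= s)) hs) x0 L.
Proof.
elim: L x0 => [//|y L IH] x0 /= /andP[x0y pL] cover.
have yL : all (fun z => y <= z) L by apply: order_path_min pL; apply: le_trans.
rewrite x0y /=; apply/andP; split.
  apply/allP => c /cover; rewrite inE -orbA.
  case/orP=> [/eqP->|/orP[cL|->]]; rewrite ?ltxx ?implybT //.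
  by rewrite ltNge (allP yL c cL).
apply: IH pL _ => c /cover; rewrite inE -orbA.
by case/orP=> [/eqP->|/orP[->|/le_trans/(_ x0y)->]]; rewrite ?lexx ?orbT.
Qed.

End CriticalValues.

Section Persistence.
Variables (F : fieldType) (R : realDomainType) (n m : nat).
Variables (I : 'I_m -> interval R) (X : R -> 'M[F]_(m, n)) (Z B : R -> 'M[F]_n).

Definition alive t : pred 'I_m := fun j => t \in I j.
Definition dies s t : pred 'I_m := fun j => alive s j && ~~ alive t j.
Definition born s t : pred 'I_m := fun j => alive t j && ~~ alive s j.
Definition kept s t : pred 'I_m := fun j => alive s j && alive t j.
Definition deaths s t := #|[set j | dies s t j]|.
Definition births s t := #|[set j | born s t j]|.
Definition dead_along x0 L : {set 'I_m} :=
  [set j | has (alive^~ j) (x0 :: L) && ~~ alive (last x0 L) j].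

Hypothesis Z_mono : forall s t, s <= t -> (Z s <= Z t)%MS.
Hypothesis B_mono : forall s t, s <= t -> (B s <= B t)%MS.
Hypothesis B_sub_Z : forall t, (B t <= Z t)%MS.
Hypothesis bars_sub_Z : forall t, (sel_mx (alive t) *m X t <= Z t)%MS.
Hypothesis bars_span : forall t, (Z t <= sel_mx (alive t) *m X t + B t)%MS.
Hypothesis bars_indep : forall t (a : 'rV_m),
  (a *m (sel_mx (alive t) *m X t) <= B t)%MS -> a *m sel_mx (alive t) = 0.
Hypothesis bars_transfer : forall j s t, s <= t -> s \in I j ->
  if t \in I j then (row j (X s) - row j (X t) <= B t)%MS
  else (row j (X s) <= B t)%MS.

Lemma bars_indep_row t (d : 'rV_m) :
  d *m sel_mx (alive t) = d -> (d *m X t <= B t)%MS -> d = 0.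
Proof. by move=> dP dB; rewrite -dP; apply: bars_indep; rewrite mulmxA dP. Qed.

Lemma bars_indepS t (f : pred 'I_m) : (forall j, f j -> alive t j) ->
  forall a : 'rV_m, (a *m (sel_mx f *m X t) <= B t)%MS -> a *m sel_mx f = 0.
Proof.
move=> ft a aB; apply: (bars_indep_row (t := t));
  by rewrite -?mulmxA ?(sel_mx_subset ft).
Qed.

Lemma transfer_sub s t : s <= t ->
  (sel_mx (alive s) *m X s - sel_mx (kept s t) *m X t <= B t)%MS.
Proof.
move=> st; apply/row_subP => j; rewrite rowE mulmxBr -!rowE !row_sel_mxM.
have := @bars_transfer j s t st; rewrite /kept /alive.
case: (s \in I j) => /=; last by rewrite !scale0r subr0 sub0mx.
by case: (t \in I j) => /= /(_ isT); rewrite ?scale1r ?scale0r ?subr0.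
Qed.

Lemma dead_sub s t : s <= t -> (sel_mx (dies s t) *m X s <= B t)%MS.
Proof.
move=> st; have dies_alive j : dies s t j -> alive s j by case/andP.
have dies_kept0 : sel_mx (dies s t) *m sel_mx (kept s t) = 0 :> 'M[F]_m.
  rewrite mul_sel_mx sel_mx_pred0 // => j.
  by rewrite /dies /kept; case: (alive t j); rewrite !andbF.
have := submx_trans (submxMl (sel_mx (dies s t)) _) (transfer_sub st).
by rewrite mulmxBr !mulmxA (sel_mx_subset dies_alive) dies_kept0 mul0mx subr0.
Qed.

Lemma rank_adds_dead s t :
  \rank (B s + sel_mx (dies s t) *m X s)%MS = (\rank (B s) + deaths s t)%N.
Proof. by apply: mxrank_adds_sel; apply: bars_indepS => j /andP[]. Qed.

Lemma deaths_le s t : s <= t -> (\rank (B s) + deaths s t <= \rank (B t))%N.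
Proof.
by move=> st; rewrite -rank_adds_dead mxrankS // addsmx_sub B_mono ?dead_sub.
Qed.

Lemma rank_B_step s t : s <= t -> (B t <= Z s)%MS ->
  \rank (B t) = (\rank (B s) + deaths s t)%N.
Proof.
move=> st BZ; apply/eqP; rewrite eqn_leq deaths_le // andbT -rank_adds_dead.
apply/mxrankS/rV_subP => v vB.
have /sub_addsmxP[u vE] := submx_trans (submx_trans vB BZ) (bars_span s).
(* v is a cycle at s; its part along the bars surviving to t is a boundary at
   t, hence vanishes. *)
have kept0 : u.1 *m sel_mx (kept s t) = 0.
  apply: (bars_indep_row (t := t)).
    by rewrite -mulmxA sel_mx_subset // => j /andP[].
  have -> : u.1 *m sel_mx (kept s t) *m X t = v - u.2 *m B s
      - u.1 *m (sel_mx (alive s) *m X s - sel_mx (kept s t) *m X t).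
    by rewrite vE addrK mulmxBr opprB addrC subrK mulmxA.
  rewrite !addmx_sub ?eqmx_opp //.
  - exact: submx_trans (submxMl _ _) (B_mono st).
  - exact: submx_trans (submxMl _ _) (transfer_sub st).
rewrite vE (sel_mx_split (alive s) (alive t)) mulmxDl mulmxDr mulmxA kept0.
by rewrite mul0mx add0r addrC addmx_sub_adds ?submxMl.
Qed.

Lemma births_le s t : s <= t -> (\rank (Z s) + births s t <= \rank (Z t))%N.
Proof.
move=> st.
have born_alive j : born s t j -> alive t j by case/andP.
suff indep (a : 'rV_m) : (a *m (sel_mx (born s t) *m X t) <= Z s)%MS ->
    a *m sel_mx (born s t) = 0.
  rewrite -(mxrank_adds_sel indep) mxrankS // addsmx_sub Z_mono //.
  rewrite -(sel_mx_subset born_alive) -mulmxA.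
  exact: submx_trans (submxMl _ _) (bars_sub_Z t).
(* Modulo B t, a cycle at s is a combination of bars surviving to t, so
   independence at t kills its component along the newborn bars. *)
move=> aZ; have /sub_addsmxP[u aE] := submx_trans aZ (bars_span s).
pose d := a *m sel_mx (born s t) - u.1 *m sel_mx (kept s t).
have d0 : d = 0.
  apply: (bars_indep_row (t := t)).
    by rewrite mulmxBl -!mulmxA !sel_mx_subset // => j /andP[].
  have -> : d *m X t
      = u.1 *m (sel_mx (alive s) *m X s - sel_mx (kept s t) *m X t) + u.2 *m B s.
    by rewrite mulmxBl -!mulmxA aE mulmxBr addrAC.
  rewrite addmx_sub //.
  - exact: submx_trans (submxMl _ _) (transfer_sub st).
  - exact: submx_trans (submxMl _ _) (B_mono st).
have -> : a *m sel_mx (born s t)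
    = (d + u.1 *m sel_mx (kept s t)) *m sel_mx (born s t).
  rewrite subrK -mulmxA mul_sel_mx; congr (_ *m _).
  by apply: eq_sel_mx => j; rewrite andbb.
rewrite d0 add0r -mulmxA mul_sel_mx sel_mx_pred0 ?mulmx0 // => j.
by rewrite /kept /born; case: (alive s j); rewrite ?andbF.
Qed.

Lemma card_alive_le t : (\rank (B t) + #|[set j | alive t j]| <= \rank (Z t))%N.
Proof.
rewrite -(mxrank_adds_sel (@bars_indep t)) mxrankS //.
by rewrite addsmx_sub B_sub_Z bars_sub_Z.
Qed.

Lemma alive_Z_const s t j : s <= t -> Z s = Z t -> alive t j -> alive s j.
Proof.
move=> st Zst; have := births_le st; rewrite Zst -[X in (_ <= X)%N]addn0.
rewrite leq_add2l leqn0 cards_eq0 => /eqP/setP/(_ j); rewrite !inE /born.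
by case: (alive s j); rewrite ?andbT // => ->.
Qed.

Lemma alive_B_const s t j : s <= t -> B s = B t -> alive s j -> alive t j.
Proof.
move=> st Bst; have := deaths_le st; rewrite Bst -[X in (_ <= X)%N]addn0.
rewrite leq_add2l leqn0 cards_eq0 => /eqP/setP/(_ j); rewrite !inE /dies.
by case: (alive t j); rewrite ?andbT // => ->.
Qed.

Lemma not_alive_Z0 t j : Z t = 0 -> ~~ alive t j.
Proof.
move=> Z0; have := card_alive_le t; rewrite Z0 mxrank0 leqn0 addn_eq0.
by case/andP=> _; rewrite cards_eq0 => /eqP/setP/(_ j); rewrite !inE => ->.
Qed.

Lemma rank_B_path x0 L : path (fun s t => (s <= t) && (B t <= Z s)%MS) x0 L ->
  \rank (B (last x0 L)) = (\rank (B x0) + #|dead_along x0 L|)%N.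
Proof.
elim: L x0 => [|y L IH] x0 /=.
  move=> _; rewrite -[LHS]addn0; congr addn; apply/esym/eqP.
  by rewrite cards_eq0; apply/eqP/setP => j; rewrite /dead_along !inE /= orbF andbN.
case/andP=> /andP[x0y BZ] pL; rewrite IH // (rank_B_step x0y BZ) -addnA.
congr addn; rewrite /deaths -cardsUI.
have yL : all (fun z => y <= z) L.
  by apply: order_path_min (sub_path _ pL) => [|s t /andP[]//]; apply: le_trans.
have convex j : alive x0 j -> has (alive^~ j) L -> alive y j.
  by move=> ax /hasP[z zL az]; apply: mem_itv_between x0y (allP yL z zL) ax az.
have last_alive j : alive (last y L) j -> alive y j || has (alive^~ j) L.
  have := mem_last y L; rewrite inE => /orP[/eqP-> -> //|lL al].
  by apply/orP; right; apply/hasP; exists (last y L).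
have [-> ->] : [set j | dies x0 y j] :|: dead_along y L = dead_along x0 (y :: L)
    /\ [set j | dies x0 y j] :&: dead_along y L = set0.
  split; apply/setP => j; rewrite /dead_along !inE /dies /=;
  move: (convex j) (last_alive j);
  case: (alive x0 j); case: (alive y j); case: (has _ L);
  case: (alive (last y L) j) => //= c1 c2; by [move: (c1 isT isT) | move: (c2 isT)].
by rewrite cards0 addn0.
Qed.

Variables (t0 T : R) (hs : seq R).
Hypothesis hs_range : forall c, c \in hs -> t0 < c <= T.
Hypothesis t0_le_T : t0 <= T.
Hypothesis Z_init : forall t, t <= t0 -> Z t = 0.
Hypothesis ZB_const : forall s t, s <= t -> {in hs, forall c, c <= t -> c <= s} ->
  Z s = Z t /\ B s = B t.
Hypothesis B_sub_Z_gap : forall s t, s <= t ->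
  {in hs, forall c, c < t -> c <= s} -> (B t <= Z s)%MS.
Hypothesis bars_nonempty : forall j, exists t, t \in I j.

Lemma not_alive_init j : ~~ alive t0 j.
Proof. exact/not_alive_Z0/Z_init. Qed.

Lemma alive_at_critical j : has (alive^~ j) hs.
Proof.
have [s sI] := bars_nonempty j.
have t0s : t0 < s.
  by rewrite ltNge; apply: contraL sI => /Z_init Z0; apply: not_alive_Z0 Z0.
have [g gin [gs gmax]] := exists_last_critical hs (ltW t0s).
have ag : alive g j by apply: alive_Z_const gs (ZB_const gs gmax).1 sI.
move: gin; rewrite inE => /orP[/eqP g0|ghs]; last by apply/hasP; exists g.
by move: ag; rewrite g0 (negPf (not_alive_init j)).
Qed.

Lemma bounded_barE j : bounded_itv (I j) = ~~ alive T j.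
Proof.
apply/idP/idP => [/(bounded_itv_notin_ge T)[c Tc]|nT].
  apply: contra; apply: alive_B_const Tc (ZB_const Tc _).2 => c' /hs_range.
  by case/andP.
have /hasP[g ghs ag] := alive_at_critical j.
have /andP[t0g gT] := hs_range ghs.
exact: bounded_itv_gap (ltW t0g) gT (not_alive_init j) ag nT.
Qed.

Lemma card_bounded_bars : #|[set j | bounded_itv (I j)]| = \rank (B T).
Proof.
pose G := rcons (sort <=%R hs) T.
have pG : path <=%R t0 G.
  rewrite rcons_path path_sortedE; last exact: le_trans.
  rewrite sort_le_sorted andbT; apply/andP; split.
    by apply/allP => c; rewrite mem_sort => /hs_range/andP[/ltW].
  have := mem_last t0 (sort <=%R hs); rewrite inE mem_sort.
  by case/orP=> [/eqP->|/hs_range/andP[]].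
have cover : {in hs, forall c, (c \in G) || (c <= t0)}.
  by move=> c chs; rewrite mem_rcons inE mem_sort chs orbT.
have gaps : subrel (fun s t => (s <= t) && all (fun c => (c < t) ==> (c <= s)) hs)
                   (fun s t => (s <= t) && (B t <= Z s)%MS).
  move=> s t /andP[st /allP gap]; rewrite st B_sub_Z_gap // => c chs.
  exact/implyP/gap.
have := rank_B_path (sub_path gaps (path_no_critical_between pG cover)).
have := mxrankS (B_sub_Z t0); rewrite Z_init // mxrank0 leqn0 => /eqP->.
rewrite /dead_along last_rcons add0n => ->; apply: eq_card => j.
rewrite !inE bounded_barE.
rewrite andb_idl // => _; have /hasP[g ghs ag] := alive_at_critical j.
by apply/hasP; exists g; rewrite // inE mem_rcons inE mem_sort ghs !orbT.
Qed.

End Persistence.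

Lemma sum_even_mult (T : eqType) (V : lmodType 'F_2) (F : T -> V) (s : seq T) :
  (forall u, ~~ odd (count_mem u s)) -> \sum_(x <- s) F x = 0.
Proof.
move=> even_s; rewrite -big_undup_iterop_count big1 // => u _.
rewrite Monoid.iteropE iter_addr_0 -(odd_double_half (count_mem u s)).
have two0 : 2%:R = 0 :> 'F_2 by apply/val_inj.
rewrite (negPf (even_s u)) add0n -mul2n mulrnA -[F u *+ 2]scaler_nat.
by rewrite two0 scale0r mul0rn.
Qed.

Section Linearization.
Variables (n : nat) (dq : 'I_n -> seq (word n)) (eps : 'I_n -> 'F_2).

Definition eps_word (w : word n) := \prod_(b <- w) eps b.
Definition lin_sum (s : seq (word n)) := \sum_(w <- s) lin eps w.

Lemma lin_cat v w :
  lin eps (v ++ w) = eps_word w *: lin eps v + eps_word v *: lin eps w.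
Proof.
elim: v => [|b v IH] /=; first by rewrite scaler0 add0r /eps_word big_nil scale1r.
rewrite IH /eps_word big_cat !big_cons /= !scalerDr !scalerA addrA.
by congr (_ *: _ + _ *: _ + _ *: _); apply: mulrC.
Qed.

Lemma row_linD a : delta_row a *m linD dq eps = lin_sum (dq a).
Proof.
apply/rowP => j; rewrite !mxE (bigD1 a) //= big1 => [|i /negPf ia].
  by rewrite !mxE eqxx mul1r addr0.
by rewrite !mxE ia mul0r.
Qed.

Hypothesis eps_dq : forall i, \sum_(w <- dq i) eps_word w = 0.

Lemma eps_dword w : \sum_(u <- dword dq w) eps_word u = 0.
Proof.
elim: w => [|a w IH] /=; first by rewrite big_nil.
rewrite big_cat !big_map /=.
under eq_bigr do rewrite /eps_word big_cat /= -/(eps_word _) -/(eps_word w).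
under [X in _ + X]eq_bigr do rewrite /eps_word big_cons -/(eps_word _).
by rewrite -mulr_suml -mulr_sumr eps_dq IH mul0r mulr0 addr0.
Qed.

Lemma lin_dword w : lin_sum (dword dq w) = lin eps w *m linD dq eps.
Proof.
elim: w => [|a w IH] /=; first by rewrite mul0mx /lin_sum big_nil.
rewrite /lin_sum big_cat !big_map /=.
under eq_bigr do rewrite lin_cat.
rewrite big_split /= -!scaler_suml big_split /= -scaler_suml -scaler_sumr.
rewrite eps_dq eps_dword !scale0r addr0 add0r -scaler_sumr.
by rewrite -/(lin_sum _) -/(lin_sum _) IH -row_linD mulmxDl -!scalemxAl.
Qed.

Lemma linD_sqr0 : dd_zero dq -> linD dq eps *m linD dq eps = 0.
Proof.
move=> dd0; apply/row_matrixP => i; rewrite row_mul row0.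
have -> : row i (linD dq eps) = lin_sum (dq i) by apply/rowP => j; rewrite !mxE.
rewrite /lin_sum mulmx_suml.
under eq_bigr do rewrite -lin_dword /lin_sum.
rewrite -(big_map (dword dq) xpredT (fun s => \sum_(w <- s) lin eps w)) -big_flatten.
exact: sum_even_mult (dd0 i).
Qed.

End Linearization.

Section Filtration.
Variables (R : realType) (n : nat) (deg : 'I_n -> int) (h : 'I_n -> R).
Variables (dq : 'I_n -> seq (word n)) (eps : 'I_n -> 'F_2).
Hypothesis h_pos : forall i, 0 < h i.
Hypothesis h_grading : forall i w, w \in dq i -> \sum_(b <- w) deg b = deg i - 1.
Hypothesis h_action : forall i w, w \in dq i -> \sum_(b <- w) h b < h i.
Hypothesis h_dd : dd_zero dq.
Hypothesis h_aug : is_augmentation dq eps deg.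

Lemma aug_deg0 a : eps a != 0 -> deg a = 0.
Proof. by move=> ea; apply/eqP; apply: contraR ea => /h_aug.1->. Qed.

Lemma eps_word_deg w : eps_word eps w != 0 -> \sum_(b <- w) deg b = 0.
Proof.
elim: w => [|a w IH]; first by rewrite big_nil.
rewrite /eps_word !big_cons mulf_eq0 negb_or => /andP[/aug_deg0-> /IH->].
by rewrite addr0.
Qed.

Lemma lin_support w j :
  lin eps w 0 j != 0 -> (j \in w) && (\sum_(b <- w) deg b == deg j).
Proof.
elim: w => [|a w IH] /=; first by rewrite mxE eqxx.
rewrite !mxE big_cons inE.
have [E|] := eqVneq (\prod_(b <- w) eps b * (j == a)%:R) 0.
  rewrite E add0r mulf_eq0 negb_or => /andP[/aug_deg0-> /IH/andP[-> /eqP->]].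
  by rewrite orbT add0r eqxx.
rewrite mulf_eq0 negb_or => /andP[ew]; case: (j =P a) => [->|] // _ _.
by rewrite (eps_word_deg ew) addr0 !eqxx.
Qed.

Lemma height_le_sum (w : word n) j : j \in w -> h j <= \sum_(b <- w) h b.
Proof.
move=> jw; rewrite (perm_big _ (perm_to_rem jw)) big_cons lerDl.
by apply: sumr_ge0 => b _; apply: ltW.
Qed.

Lemma linD_support i j :
  linD dq eps i j != 0 -> deg j = deg i - 1 /\ h j < h i.
Proof.
rewrite mxE summxE => /eqP nz.
have /hasP[w wi /lin_support/andP[jw /eqP wdeg]] :
    has (fun w => lin eps w 0 j != 0) (dq i).
  apply: contraT => /hasPn lin0; case: nz.
  by rewrite big1_seq // => w /andP[_ /lin0/negPn/eqP].
split; first by rewrite -wdeg (h_grading wi).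
exact: le_lt_trans (height_le_sum jw) (h_action wi).
Qed.

Lemma Sfilt_sel k t : Sfilt deg h k t = sel_mx (fun i => (deg i == k) && (h i <= t)).
Proof. by []. Qed.

Lemma linD_filt k s t : (forall i j, h i <= t -> h j < h i -> h j <= s) ->
  (Sfilt deg h (k + 1) t *m linD dq eps <= Sfilt deg h k s)%MS.
Proof.
move=> hst; suff -> : Sfilt deg h (k + 1) t *m linD dq eps
    = Sfilt deg h (k + 1) t *m linD dq eps *m Sfilt deg h k s by apply: submxMl.
apply/matrixP => i j; have := @linD_support i j.
rewrite mul_mx_diag mul_diag_mx !mxE; set v := (\sum_(w <- dq i) lin eps w) 0 j => supp.
have [->|/supp[dj hj]] := eqVneq v 0; first by rewrite !mulr0 mul0r.
case: andP => [[/eqP di hi]|_]; last by rewrite !mul0r.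
by rewrite dj di addrK eqxx (hst _ _ hi hj) mulr1.
Qed.

Lemma fboundaries_sub k s t : (forall i j, h i <= t -> h j < h i -> h j <= s) ->
  (fboundaries dq eps deg h k t <= fcycles dq eps deg h k s)%MS.
Proof.
move=> hst; rewrite sub_capmx linD_filt // sub_kermx -mulmxA.
by rewrite (linD_sqr0 h_aug.2 h_dd) mulmx0 eqxx.
Qed.

Lemma Sfilt_top k t : (forall i, h i <= t) -> Sfilt deg h k t = Sdeg deg k.
Proof. by move=> ht; congr diag_mx; apply/rowP => i; rewrite !mxE ht andbT. Qed.

Lemma height_le_total i : h i <= \sum_j h j.
Proof. by rewrite (bigD1 i) //= lerDl sumr_ge0 // => j _; apply: ltW. Qed.

Lemma boundaries_sub_cycles k : (boundaries dq eps deg k <= cycles dq eps deg k)%MS.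
Proof.
pose T := \sum_j h j.
have := @fboundaries_sub k T T (fun _ j _ _ => height_le_total j).
by rewrite /fboundaries /fcycles !Sfilt_top //; apply: height_le_total.
Qed.

Variables (m : nat) (I : 'I_m -> interval R) (x : R -> 'M['F_2]_(m, n)) (k : int).
Hypothesis h_bar : is_barcode dq eps deg h k I x.

Lemma card_finite_bars : nfinite I = \rank (boundaries dq eps deg k).
Proof.
have [bars_nonempty [bars_t bars_transfer]] := h_bar.
pose hs := [seq h i | i <- enum 'I_n].
have h_hs i : h i \in hs by rewrite map_f ?mem_enum.
have Sfilt_mono k' s t : s <= t -> (Sfilt deg h k' s <= Sfilt deg h k' t)%MS.
  by move=> st; apply: sel_mxS => i /andP[-> /le_trans]; apply.
have Sfilt_const k' s t : s <= t -> {in hs, forall c, c <= t -> c <= s} ->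
    Sfilt deg h k' s = Sfilt deg h k' t.
  move=> st gap; rewrite !Sfilt_sel; apply: eq_sel_mx => i /=; congr (_ && _).
  by apply/idP/idP => [/le_trans->//|]; apply: gap.
rewrite /nfinite /boundaries -(Sfilt_top (k + 1) height_le_total).
apply: (@card_bounded_bars _ _ _ _ I x (fcycles dq eps deg h k)
          (fboundaries dq eps deg h k) _ _ _ _ _ _ _ 0 (\sum_j h j) hs).
- by move=> s t st; apply: capmxS (Sfilt_mono _ _ _ st) (submx_refl _).
- by move=> s t st; apply: submxMr (Sfilt_mono _ _ _ st).
- by move=> t; apply: fboundaries_sub => i j hi /ltW hj; apply: le_trans hj hi.
- by move=> t; have [] := bars_t t.
- by move=> t; have [_ []] := bars_t t.
- by move=> t; have [_ []] := bars_t t.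
- exact: bars_transfer.
- by move=> c /mapP[i _ ->]; rewrite h_pos height_le_total.
- by apply: sumr_ge0 => i _; apply: ltW.
- move=> t t0; rewrite /fcycles Sfilt_sel sel_mx_pred0 ?cap0mx // => i /=.
  by rewrite leNgt (le_lt_trans t0 (h_pos i)) andbF.
- by move=> s t st gap; rewrite /fcycles /fboundaries !(Sfilt_const _ _ _ st gap).
- move=> s t st gap; apply: fboundaries_sub => i j hi hj.
  exact: gap (h_hs j) (lt_le_trans hj hi).
- exact: bars_nonempty.
Qed.

End Filtration.

Theorem theorem6p1 (R : realType) (n : nat) (deg : 'I_n -> int) (h : 'I_n -> R)
    (dq : 'I_n -> seq (seq 'I_n)) (eps : 'I_n -> 'F_2)
    (h_pos : forall i, 0 < h i)
    (h_grading : forall i, forall w, w \in dq i -> \sum_(b <- w) deg b = deg i - 1)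
    (h_action : forall i, forall w, w \in dq i -> \sum_(b <- w) h b < h i)
    (h_dd : dd_zero dq)
    (h_aug : is_augmentation dq eps deg)
    (m : int -> nat) (I : forall k : int, 'I_(m k) -> interval R)
    (x : forall k : int, R -> 'M['F_2]_(m k, n))
    (h_bar : forall k : int, is_barcode dq eps deg h k (I k) (x k)) :
  forall k : int,
    (mc_coef deg k)%:Z - (pc_coef dq eps deg k)%:Z
    = (nfinite (I (k - 1)))%:Z + (nfinite (I k))%:Z.
Proof.
move=> k.
have finite_bars k' := card_finite_bars h_pos h_grading h_action h_dd h_aug (h_bar k').
have BZ := boundaries_sub_cycles h_pos h_grading h_action h_dd h_aug k.
have mc_rank : mc_coef deg k = \rank (Sdeg deg k).
  exact: esym (rank_sel_mx (F := 'F_2) (fun i => deg i == k)).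
have boundaries_pred : boundaries dq eps deg (k - 1) = Sdeg deg k *m linD dq eps.
  by rewrite /boundaries subrK.
have rank_nullity := mxrank_mul_ker (Sdeg deg k) (linD dq eps).
have := mxrankS BZ; move: rank_nullity.
rewrite !finite_bars boundaries_pred mc_rank /pc_coef /cycles.
(* some occurrences of these ranks agree only up to conversion, which [lia]
   does not see *)
move: (\rank (Sdeg deg k)) (\rank (_ *m _)) (\rank (_ :&: _)%MS)
      (\rank (boundaries _ _ _ _)).
lia.
Qed.
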